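(* Let $\gamma\ge1$, $u\in\mathbb N_{\ge1}$, and let $X_1,\dots,X_u$ be independent random variables with $X_m\sim\mathrm{Bernoulli}(1-1/m^\gamma)$ for $m=1,\dots,u$. Then for every $\eta\ge1$ with $\lceil\sum_{m=1}^u1/m^\gamma\rceil\le\eta\le u$, $$\mathbb P\Bigl(\sum_{m=1}^uX_m<u-\eta\Bigr)\le\frac{u^{1+\eta}}{\eta^{(\gamma+1)\eta}}\exp\bigl((\gamma+1)\eta\bigr).$$ *)

From HB Require Import structures.
From mathcomp Require Import all_boot all_order all_algebra.
From mathcomp Require Import all_classical all_reals all_analysis.
Set Implicit Arguments. Unset Strict Implicit. Unset Printing Implicit Defensive.
Import Order.TTheory GRing.Theory Num.Theory.
Local Open Scope classical_set_scope.
Local Open Scope ring_scope.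

Definition is_bernoulli (R : realType) (d : measure_display)
  (T : measurableType d) (P : probability T R) (X : T -> R) (p : R) : Prop :=
  P (X @^-1` [set 1]) = p%:E /\ P (X @^-1` [set 0]) = (1 - p)%:E.

(* Mutual independence of a finite family of real random variables:
   the product rule for the preimages of any family of measurable sets
   (taking B i = setT recovers every subfamily). *)
Definition mutually_independent (R : realType) (d : measure_display)
  (T : measurableType d) (P : probability T R) (n : nat)
  (X : 'I_n -> T -> R) : Prop :=
  forall B : 'I_n -> set R, (forall i, measurable (B i)) ->
    fine (P (\bigcap_(i in [set: 'I_n]) (X i @^-1` B i)))
    = \prod_(i < n) fine (P (X i @^-1` B i)).

From HB Require Import structures.
From mathcomp Require Import all_boot all_order all_algebra.
From mathcomp Require Import all_classical all_reals all_analysis.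
From mathcomp Require Import lra.
Set Implicit Arguments. Unset Strict Implicit. Unset Printing Implicit Defensive.
Import Order.TTheory GRing.Theory Num.Theory.
Local Open Scope classical_set_scope.
Local Open Scope ring_scope.

(* Outside a null event every X_m is 0 or 1, so on the event
   sum_m X_m < u - eta more than eta of the X_m vanish, hence all of them on
   some k-subset S of indices, k = floor eta + 1.  Independence and a union
   bound give P <= sum_{|S| = k} prod_{m in S} m^-gamma <= u^k / k!^(1+gamma),
   because the product of k distinct positive integers is at least k!.
   Finally u^k <= u^(1+eta) and k! >= (k/e)^k >= (eta/e)^eta, the map
   x |-> x ln x - x being nondecreasing on [1, +oo). *)

Lemma ffact_le_expn n m : (n ^_ m <= n ^ m)%N.
Proof.
rewrite ffact_prod -[in (n ^ m)%N](card_ord m) -prod_nat_const.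
by apply: leq_prod => i _; exact: leq_subr.
Qed.

Lemma fact_size_le_prod_succ n (s : seq nat) :
  uniq s -> all (gtn n) s -> ((size s)`! <= \prod_(i <- s) i.+1)%N.
Proof.
elim: n s => [|n IH] s s_uniq s_lt.
  by case: s s_uniq s_lt => [_ _|]; rewrite ?big_nil.
have [ns|ns] := boolP (n \in s); last first.
  apply: IH => //; apply/allP => i si; have := allP s_lt i si.
  by rewrite /= ltnS leq_eqVlt => /predU1P[in_|//]; move: ns; rewrite -in_ si.
have perm_s := perm_to_rem ns.
rewrite (perm_big _ perm_s) big_cons (perm_size perm_s) factS.
have r_uniq : uniq (rem n s) by exact: rem_uniq.
have r_lt : all (gtn n) (rem n s).
  apply/allP => i; rewrite (mem_rem_uniq _ s_uniq) inE => /andP[ni si].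
  by have := allP s_lt i si; rewrite /= ltnS leq_eqVlt (negPf ni).
apply: leq_mul; last exact: IH.
have r_sub : {subset rem n s <= iota 0 n}.
  by move=> i /(allP r_lt) lt_in; rewrite mem_iota add0n.
by rewrite ltnS -[leqRHS](size_iota 0) uniq_leq_size.
Qed.

Lemma fact_card_le_prod_succ u (S : {set 'I_u}) :
  ((#|S|)`! <= \prod_(i in S) i.+1)%N.
Proof.
rewrite -big_enum -(big_map val xpredT (fun i => i.+1)) cardE -(size_map val).
apply: (@fact_size_le_prod_succ u).
  by rewrite map_inj_uniq ?enum_uniq //; exact: val_inj.
by apply/allP => _ /mapP[i _ ->]; exact: ltn_ord.
Qed.

Lemma natrX_self_le_expR_fact (R : realType) k :
  (k%:R : R) ^+ k <= expR k%:R * k`!%:R.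
Proof.
case: k => [|k]; first by rewrite expr0 expR0 fact0 mulr1.
have := expR_ge1Dxn k (ler0n R k.+1).
rewrite -ler_pdivrMr ?ltr0n ?fact_gt0 // => /(le_trans _); apply.
by rewrite lerDr.
Qed.

Lemma ler_xlnx_subr (R : realType) (x y : R) :
  1 <= x -> x <= y -> x * ln x - x <= y * ln y - y.
Proof.
move=> x1 xy; have x0 : 0 < x by lra.
have y0 : 0 < y by lra.
have ln_xy : ln x - ln y <= x / y - 1.
  have xy0 : 0 < x / y by rewrite divr_gt0.
  rewrite -ln_div ?posrE //.
  by have := @le_ln1Dx R (x / y - 1); rewrite addrCA subrr addr0; apply; lra.
have dy : y - x <= y * (ln y - ln x).
  have := ler_wpM2l (ltW y0) ln_xy.
  by rewrite mulrBr mulrBr mulr1 mulrCA divff ?gt_eqF // mulr1; lra.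
have : 0 <= (y - x) * ln x by rewrite mulr_ge0 ?ln_ge0 ?subr_ge0.
nra.
Qed.

Lemma ln_fact_ge (R : realType) (x : R) k :
  1 <= x -> x <= k%:R -> x * ln x - x <= ln k`!%:R.
Proof.
move=> x1 xk; apply: le_trans (ler_xlnx_subr x1 xk) _.
have k0 : (0 : R) < k%:R by lra.
have F0 : (0 : R) < k`!%:R by rewrite ltr0n fact_gt0.
have := natrX_self_le_expR_fact R k.
rewrite -ler_ln ?posrE ?exprn_gt0 ?mulr_gt0 ?expR_gt0 //.
by rewrite lnXn // lnM ?posrE ?expR_gt0 // expRK -[_ *+ k]mulr_natl; lra.
Qed.

Lemma natrX_div_fact_powR_le (R : realType) (gamma eta : R) (u k : nat) :
  0 <= gamma -> 1 <= eta -> (0 < u)%N -> eta <= k%:R -> k%:R <= eta + 1 ->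
  u%:R ^+ k / k`!%:R `^ (1 + gamma)
    <= u%:R `^ (1 + eta) / eta `^ ((gamma + 1) * eta) * expR ((gamma + 1) * eta).
Proof.
move=> g0 e1 u0 ek ke.
have e0 : 0 < eta by lra.
have U0 : (0 : R) < u%:R by rewrite ltr0n.
have F0 : (0 : R) < k`!%:R by rewrite ltr0n fact_gt0.
rewrite -ler_ln ?posrE
  ?mulr_gt0 ?divr_gt0 ?invr_gt0 ?exprn_gt0 ?powR_gt0 ?expR_gt0 //.
rewrite !lnM ?posrE ?divr_gt0 ?invr_gt0 ?exprn_gt0 ?powR_gt0 ?expR_gt0 //.
rewrite !lnV ?posrE ?powR_gt0 // !ln_powR lnXn // expRK -[_ *+ k]mulr_natl.
have lnU : 0 <= ln (u%:R : R) by rewrite ln_ge0 // ler1n.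
have lnF := ln_fact_ge e1 ek.
have : k%:R * ln u%:R <= (1 + eta) * ln u%:R by rewrite ler_wpM2r //; lra.
have : (gamma + 1) * (eta * ln eta - eta) <= (1 + gamma) * ln k`!%:R.
  by rewrite addrC ler_wpM2l //; lra.
lra.
Qed.

Lemma prod_powR (R : realType) (I : Type) (r : seq I) (P : pred I)
    (F : I -> R) g :
  (forall i, 0 <= F i) ->
  \prod_(i <- r | P i) F i `^ g = (\prod_(i <- r | P i) F i) `^ g.
Proof.
move=> F0; suff [] : 0 <= \prod_(i <- r | P i) F i /\
    \prod_(i <- r | P i) F i `^ g = (\prod_(i <- r | P i) F i) `^ g by [].
apply: (big_rec2 (fun a b => 0 <= b /\ a = b `^ g)); first by rewrite powR1.
by move=> i a b _ [b0 ->]; rewrite mulr_ge0 // powRM.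
Qed.

Lemma bin_le_natrX_div_fact (R : realType) n k :
  ('C(n, k)%:R : R) <= n%:R ^+ k / k`!%:R.
Proof.
rewrite ler_pdivlMr ?ltr0n ?fact_gt0 // -natrX -natrM ler_nat bin_ffact.
exact: ffact_le_expn.
Qed.

Lemma sum_prod_invpowR_le (R : realType) (gamma : R) u k : 0 <= gamma ->
  \sum_(S : {set 'I_u} | #|S| == k) \prod_(i in S) ((i.+1)%:R `^ gamma)^-1
    <= u%:R ^+ k / k`!%:R `^ (1 + gamma).
Proof.
move=> g0; have F0 : (0 : R) < k`!%:R by rewrite ltr0n fact_gt0.
have term_le (S : {set 'I_u}) : #|S| == k ->
    \prod_(i in S) ((i.+1)%:R `^ gamma)^-1 <= (k`!%:R `^ gamma)^-1 :> R.
  move=> /eqP <-; rewrite prodfV prod_powR // -natr_prod.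
  rewrite lef_pV2 ?posrE ?powR_gt0 ?ltr0n ?prodn_gt0 ?fact_gt0 //.
  by rewrite ge0_ler_powR ?nnegrE ?ler0n // ler_nat fact_card_le_prod_succ.
apply: le_trans (ler_sum _ term_le) _.
rewrite sumr_const (eq_card (B := [set S : {set 'I_u} | #|S| == k]%SET)); last first.
  by move=> S; rewrite !inE.
rewrite card_draws card_ord -[_ *+ 'C(u, k)]mulr_natl.
rewrite powRD ?(gt_eqF F0) ?implybT // powRr1 ?ler0n //.
rewrite invfM mulrA ler_wpM2r ?invr_ge0 ?powR_ge0 //.
exact: bin_le_natrX_div_fact.
Qed.

Lemma le_measure_bigsetU d (T : ringOfSetsType d) (R : realFieldType)
    (mu : {content set T -> \bar R}) (I : Type) (r : seq I) (P : pred I)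
    (F : I -> set T) :
  (forall i, P i -> measurable (F i)) ->
  (mu (\big[setU/set0]_(i <- r | P i) F i) <= \sum_(i <- r | P i) mu (F i))%E.
Proof.
move=> mF; suff [] : measurable (\big[setU/set0]_(i <- r | P i) F i) /\
    (mu (\big[setU/set0]_(i <- r | P i) F i) <= \sum_(i <- r | P i) mu (F i))%E.
  by [].
elim/big_ind2 : _ => [|A a B b [mA Aa] [mB Bb]|i Pi]; first by rewrite measure0.
  by split; [exact: measurableU | exact: le_trans (measureU2 _ _ _) (leeD _ _)].
by split; [exact: mF|].
Qed.

Lemma sum01_card_eq0 (R : numDomainType) (I : finType) (x : I -> R) :
  (forall i, x i = 0 \/ x i = 1) ->
  #|[pred i | x i == 0]|%:R = #|I|%:R - \sum_i x i.
Proof.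
move=> x01; rewrite (bigID (fun i => x i == 0)) /= big1; last by move=> i /eqP.
rewrite add0r (eq_bigr (fun=> 1)); last first.
  by move=> i; case: (x01 i) => ->; rewrite ?eqxx.
by rewrite sumr_const -(cardC [pred i | x i == 0]) natrD addrK.
Qed.

Section bernoulli_zeros.
Context (R : realType) (d : measure_display) (T : measurableType d).
Variable P : probability T R.

Lemma bernoulli_not01_null (X : T -> R) (p : R) :
  measurable_fun setT X -> is_bernoulli P X p ->
  P (~` (X @^-1` [set 0] `|` X @^-1` [set 1])) = 0%E.
Proof.
move=> mX [X1 X0].
have mpre (B : set R) : measurable B -> measurable (X @^-1` B).
  by move=> mB; rewrite -[X @^-1` B]setTI; exact: mX.
have m0 := mpre _ (measurable_set1 0); have m1 := mpre _ (measurable_set1 1).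
have disj : X @^-1` [set 0] `&` X @^-1` [set 1] = set0.
  by apply/seteqP; split => // t [/= -> /esym/eqP]; rewrite oner_eq0.
have -> : P (~` (X @^-1` [set 0] `|` X @^-1` [set 1])) =
          (1 - (P (X @^-1` [set 0%R]) + P (X @^-1` [set 1%R])))%E.
  by rewrite probability_setC ?measureU //; exact: measurableU.
by rewrite X0 X1 -EFinD subrK subrr.
Qed.

Variables (u : nat) (X : 'I_u -> T -> R) (q : 'I_u -> R).
Hypothesis mX : forall i, measurable_fun setT (X i).
Hypothesis bernX : forall i, is_bernoulli P (X i) (1 - q i).
Hypothesis indepX : mutually_independent P X.

Let mX_preimage i (B : set R) : measurable B -> measurable (X i @^-1` B).
Proof. by move=> mB; rewrite -[X i @^-1` B]setTI; exact: mX. Qed.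

Definition zero_on (S : {set 'I_u}) : set T :=
  [set t | forall i, i \in S -> X i t = 0].

Let zero_onE S : zero_on S =
  \bigcap_(i in [set: 'I_u]) X i @^-1` (if i \in S then [set 0] else setT).
Proof.
apply/seteqP; split => t /= zt.
  by move=> i _; case: ifPn => // /zt.
by move=> i iS; have := zt i I; rewrite iS.
Qed.

Lemma measurable_zero_on S : measurable (zero_on S).
Proof.
rewrite zero_onE; apply: fin_bigcap_measurable => [|i _]; first exact: finite_finset.
by apply: mX_preimage; case: ifP.
Qed.

Lemma prob_zero_on S : P (zero_on S) = (\prod_(i in S) q i)%:E.
Proof.
have mB i : measurable (if i \in S then [set 0 : R] else setT) by case: ifP.
rewrite -(fineK (fin_num_measure P _ (measurable_zero_on S))) zero_onE.
rewrite (indepX mB) [in RHS]big_mkcond; congr EFin; apply: eq_bigr => i _.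
case: ifP => _; last by rewrite preimage_setT probability_setT.
by have [_ ->] := bernX i; rewrite /= opprB addrC subrK.
Qed.

Let not01 := \big[setU/set0]_(i < u) ~` (X i @^-1` [set 0] `|` X i @^-1` [set 1]).

Let measurable_not01 : measurable not01.
Proof.
by apply: bigsetU_measurable => i _; apply/measurableC/measurableU;
  apply: mX_preimage; exact: measurable_set1.
Qed.

Let prob_not01 : P not01 = 0%E.
Proof.
apply/eqP; rewrite -measure_le0; apply: le_trans (le_measure_bigsetU _ _ _) _.
  by move=> i _; apply/measurableC/measurableU; apply: mX_preimage;
    exact: measurable_set1.
by rewrite big1 // => i _; exact: bernoulli_not01_null (mX i) (bernX i).
Qed.

Lemma bernoulli_tail_sub k (eta : R) : k%:R <= eta + 1 ->
  [set t | \sum_(i < u) X i t < u%:R - eta] `<=`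
  \big[setU/set0]_(S : {set 'I_u} | #|S| == k) zero_on S `|` not01.
Proof.
move=> ke t tail; have [|in01] := pselect (not01 t); [by right | left].
have X01 i : X i t = 0 \/ X i t = 1.
  apply: contra_notP in01 => /not_orP[X0 X1].
  rewrite /not01 -bigcup_seq_cond; exists i; last by case.
  by rewrite /= mem_index_enum.
set Z := [pred i | X i t == 0].
have eta_lt_Z : eta < #|Z|%:R.
  by rewrite (sum01_card_eq0 X01) card_ord; move: tail => /=; lra.
have /card_geqP[s [s_uniq s_size sZ]] : (k <= #|Z|)%N.
  by rewrite -ltnS -(ltr_nat R) -natr1; lra.
rewrite -bigcup_seq_cond; exists [set i in s]%SET.
  by rewrite /= mem_index_enum cardsE (card_uniqP s_uniq) s_size eqxx.
by move=> i; rewrite inE => /sZ /eqP.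
Qed.

Lemma prob_bernoulli_tail_le k (eta : R) : k%:R <= eta + 1 ->
  (P [set t | (\sum_(i < u) X i t < u%:R - eta)%R]
    <= (\sum_(S : {set 'I_u} | #|S| == k) \prod_(i in S) q i)%:E)%E.
Proof.
move=> ke.
set Zk := \big[setU/set0]_(S : {set 'I_u} | #|S| == k) zero_on S.
have m_tail : measurable [set t | \sum_(i < u) X i t < u%:R - eta].
  rewrite -[X in measurable X]setTI -[X in _ `&` X]/(_ @^-1` `]-oo, u%:R - eta[).
  by apply: measurable_sum => // i; exact: mX.
have mZk : measurable Zk.
  by apply: bigsetU_measurable => S _; exact: measurable_zero_on.
apply: (@le_trans _ _ (P (Zk `|` not01))).
  by apply: le_measure (bernoulli_tail_sub ke); rewrite inE //; exact: measurableU.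
rewrite measureU0 //.
apply: le_trans
  (@le_measure_bigsetU _ _ _ P _ _ (fun S : {set 'I_u} => #|S| == k) _ _) _.
  by move=> S _; exact: measurable_zero_on.
by rewrite -sumEFin; apply: lee_sum => S _; rewrite -prob_zero_on.
Qed.
End bernoulli_zeros.

Theorem lemmaC2 (R : realType) (d : measure_display) (T : measurableType d)
  (P : probability T R) (gamma eta : R) (u : nat) (X : 'I_u -> T -> R) :
  1 <= gamma -> (1 <= u)%N ->
  (forall i, measurable_fun setT (X i)) ->
  (forall i : 'I_u, is_bernoulli P (X i) (1 - (((i.+1)%:R `^ gamma)^-1))) ->
  mutually_independent P X ->
  1 <= eta ->
  (Num.ceil (\sum_(i < u) ((i.+1)%:R `^ gamma)^-1))%:~R <= eta ->
  eta <= u%:R ->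
  (P [set t | (\sum_(i < u) X i t < u%:R - eta)%R]
    <= (u%:R `^ (1 + eta) / eta `^ ((gamma + 1) * eta)
        * expR ((gamma + 1) * eta))%:E)%E.
Proof.
(* The bound holds without the conditions ceil (sum_m m^-gamma) <= eta <= u. *)
move=> gamma1 u_gt0 mX bernX indepX eta1 _ _.
set k := (Num.truncn eta).+1.
have /andP[trunc_le eta_lt_k] := truncn_itv (le_trans ler01 eta1).
have k_le : k%:R <= eta + 1 by rewrite -natr1 lerD2r.
have gamma0 : 0 <= gamma := le_trans ler01 gamma1.
apply: le_trans (prob_bernoulli_tail_le mX bernX indepX k_le) _; rewrite lee_fin.
apply: le_trans (sum_prod_invpowR_le u k gamma0) _.
exact: natrX_div_fact_powR_le gamma0 eta1 u_gt0 (ltW eta_lt_k) k_le.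
Qed.
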